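(* Let $G$ be a finite group and $H$ a subgroup such that $\mathcal{O}_G(H)$ is Boolean, and let $A$ be an atom of $\mathcal{O}_G(H)$ with lattice complement $A^{\complement}$. If $K_1,K_2\in\mathcal{O}_{A^{\complement}}(H)$ with $K_1<K_2$, then $|K_1\vee A:K_1|\le|K_2\vee A:K_2|$. Equivalently, if $K_1,K_2\in\mathcal{O}_G(A)$ with $K_1<K_2$, then $|K_1:K_1\wedge A^{\complement}|\le|K_2:K_2\wedge A^{\complement}|$. Moreover, if $|G:A^{\complement}|=2$ then $|K\vee A:K|=2$ for all $K\in\mathcal{O}_{A^{\complement}}(H)$.
   Context: $\mathcal{O}_X(Y)=\{K\mid Y\le K\le X\}$, with $\vee$ the subgroup generated and $\wedge$ the intersection. Boolean means isomorphic to the lattice of subsets of a finite set. The lattice complement $K^{\complement}$ of $K\in\mathcal{O}_G(H)$ is the unique element with $K\wedge K^{\complement}=H$ and $K\vee K^{\complement}=G$. An atom is a minimal element of $\mathcal{O}_G(H)\setminus\{H\}$. *)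

From mathcomp Require Import all_boot all_fingroup.
Set Implicit Arguments. Unset Strict Implicit. Unset Printing Implicit Defensive.
Local Open Scope group_scope.

Definition in_interval (gT : finGroupType) (X Y K : {group gT}) : bool :=
  (Y \subset K) && (K \subset X).

(* O_G(H) is Boolean: order-isomorphic (hence lattice-isomorphic) to the
   lattice of all subsets of a finite set {0,...,n-1}. *)
Definition boolean_interval (gT : finGroupType) (G H : {group gT}) : Prop :=
  exists n : nat, exists f : {group gT} -> {set 'I_n},
    (forall K1 K2 : {group gT}, in_interval G H K1 -> in_interval G H K2 ->
        (K1 \subset K2) = (f K1 \subset f K2)) /\
    (forall S : {set 'I_n}, exists2 K : {group gT}, in_interval G H K & f K = S).

Definition is_atom (gT : finGroupType) (G H A : {group gT}) : Prop :=
  [/\ in_interval G H A, A :!=: H &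
      forall K : {group gT}, in_interval G H K -> K \subset A ->
        K :=: H \/ K :=: A].

Definition is_lcompl (gT : finGroupType) (G H K C : {group gT}) : Prop :=
  [/\ in_interval G H C, K :&: C = H & K <*> C = G].

From mathcomp Require Import all_boot all_fingroup.
Set Implicit Arguments. Unset Strict Implicit. Unset Printing Implicit Defensive.
Local Open Scope group_scope.

(* A Boolean interval is distributive, so for H <= K1 <= K2 <= A^c we get
   (K1 v A) ^ K2 = K1 v (A ^ K2) = K1 v H = K1.  Hence
   |K1 v A : K1| = |K1 v A : K2|, which counts cosets of K2 meeting K1 v A,
   all of which also meet K2 v A.  The second inequality is
   |K : K ^ A^c| = |K A^c : A^c|, monotone in K.  When |G : A^c| = 2, the
   index |K v A : K| exceeds 1 (A is not below K, as A ^ A^c = H < A) and is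
   at most |A^c v A : A^c| = 2. *)

Lemma subset_leq_index (gT : finGroupType) (X Y : {set gT}) (C : {group gT}) :
  X \subset Y -> (#|X : C| <= #|Y : C|)%N.
Proof. by move=> sXY; apply/subset_leq_card/imsetS. Qed.

Section IntervalClosure.

Variables (gT : finGroupType) (G H X Y : {group gT}).
Hypotheses (iX : in_interval G H X) (iY : in_interval G H Y).

Lemma in_intervalI : in_interval G H (X :&: Y)%G.
Proof.
case/andP: iX => sHX sXG; case/andP: iY => sHY _.
by rewrite /in_interval /= subsetI sHX sHY (subset_trans (subsetIl _ _)).
Qed.

Lemma in_intervalY : in_interval G H (X <*> Y)%G.
Proof.
case/andP: iX => sHX sXG; case/andP: iY => _ sYG.
by rewrite /in_interval /= join_subG sXG sYG (subset_trans sHX) ?joing_subl.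
Qed.

End IntervalClosure.

Section LatticeIso.

Variables (gT : finGroupType) (G H : {group gT}) (n : nat).
Variable f : {group gT} -> {set 'I_n}.
Hypothesis f_mono : forall K1 K2 : {group gT},
  in_interval G H K1 -> in_interval G H K2 -> (K1 \subset K2) = (f K1 \subset f K2).
Hypothesis f_surj : forall S : {set 'I_n}, exists2 K : {group gT}, in_interval G H K & f K = S.

Lemma lattice_iso_inj (X Y : {group gT}) :
  in_interval G H X -> in_interval G H Y -> f X = f Y -> X :=: Y.
Proof. by move=> iX iY fXY; apply/eqP; rewrite eqEsubset !f_mono // fXY subxx. Qed.

Lemma lattice_isoI (X Y : {group gT}) :
  in_interval G H X -> in_interval G H Y -> f (X :&: Y)%G = f X :&: f Y.
Proof.
move=> iX iY; have iXY := in_intervalI iX iY.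
apply/eqP; rewrite eqEsubset subsetI -!f_mono //= subsetIl subsetIr /=.
have [K iK fK] := f_surj (f X :&: f Y).
have sKX : K \subset X by rewrite f_mono // fK subsetIl.
have sKY : K \subset Y by rewrite f_mono // fK subsetIr.
by rewrite -fK -f_mono //= subsetI sKX.
Qed.

Lemma lattice_isoY (X Y : {group gT}) :
  in_interval G H X -> in_interval G H Y -> f (X <*> Y)%G = f X :|: f Y.
Proof.
move=> iX iY; have iXY := in_intervalY iX iY.
apply/eqP; rewrite eqEsubset subUset -!f_mono //= joing_subl joing_subr !andbT.
have [K iK fK] := f_surj (f X :|: f Y).
have sXK : X \subset K by rewrite f_mono // fK subsetUl.
have sYK : Y \subset K by rewrite f_mono // fK subsetUr.
by rewrite -fK -f_mono //= join_subG sXK.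
Qed.

Lemma lattice_iso_joingIl (X Y Z : {group gT}) :
  in_interval G H X -> in_interval G H Y -> in_interval G H Z ->
  (X <*> Y) :&: Z = (X :&: Z) <*> (Y :&: Z).
Proof.
move=> iX iY iZ; have iXY := in_intervalY iX iY.
have iXZ := in_intervalI iX iZ; have iYZ := in_intervalI iY iZ.
apply: (lattice_iso_inj (in_intervalI iXY iZ) (in_intervalY iXZ iYZ)).
by rewrite !(lattice_isoI, lattice_isoY) // setIUl.
Qed.

End LatticeIso.

Lemma boolean_interval_joingIl (gT : finGroupType) (G H X Y Z : {group gT}) :
  boolean_interval G H ->
  in_interval G H X -> in_interval G H Y -> in_interval G H Z ->
  (X <*> Y) :&: Z = (X :&: Z) <*> (Y :&: Z).
Proof. by case=> n [f [f_mono f_surj]]; exact: (lattice_iso_joingIl f_mono f_surj). Qed.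

Section ComplementIndex.

Variables (gT : finGroupType) (G H A Ac : {group gT}).
Hypotheses (boolGH : boolean_interval G H) (iA : in_interval G H A).
Hypothesis complA : is_lcompl G H A Ac.

Lemma joing_complI (K1 K2 : {group gT}) :
  in_interval Ac H K1 -> K1 \subset K2 -> K2 \subset Ac -> (K1 <*> A) :&: K2 = K1.
Proof.
case: complA => /andP[_ sAcG] AIAc _ /andP[sHK1 _] sK12 sK2Ac.
have sK2G := subset_trans sK2Ac sAcG.
have iK2 : in_interval G H K2 by rewrite /in_interval sK2G (subset_trans sHK1).
have iK1 : in_interval G H K1 by rewrite /in_interval sHK1 (subset_trans sK12).
rewrite (boolean_interval_joingIl boolGH) // (setIidPl sK12).
apply/joing_idPl; rewrite (subset_trans _ sHK1) // -AIAc.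
exact: setIS.
Qed.

Lemma index_joing_compl_mono (K1 K2 : {group gT}) :
  in_interval Ac H K1 -> K1 \subset K2 -> K2 \subset Ac ->
  (#|K1 <*> A : K1| <= #|K2 <*> A : K2|)%N.
Proof.
move=> iK1 sK12 sK2Ac.
rewrite -{2}(joing_complI iK1 sK12 sK2Ac) indexgI.
by apply: subset_leq_index; rewrite join_subG joing_subr (subset_trans sK12) ?joing_subl.
Qed.

End ComplementIndex.

Lemma index_join_atom_gt1 (gT : finGroupType) (G H A Ac K : {group gT}) :
  is_atom G H A -> is_lcompl G H A Ac -> K \subset Ac -> (1 < #|K <*> A : K|)%N.
Proof.
case=> /andP[sHA _] neAH _ [_ AIAc _] sKAc.
rewrite indexg_gt1; apply: contra neAH => sJK.
have sAK := subset_trans (joing_subr _ _) sJK.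
by rewrite eqEsubset sHA andbT -AIAc subsetI subxx (subset_trans sAK).
Qed.

Theorem lemma10p6 (gT : finGroupType) (G H A Ac : {group gT}) :
  H \subset G ->
  boolean_interval G H ->
  is_atom G H A ->
  is_lcompl G H A Ac ->
  [/\ (forall K1 K2 : {group gT}, in_interval Ac H K1 -> in_interval Ac H K2 ->
         K1 \proper K2 -> #|K1 <*> A : K1| <= #|K2 <*> A : K2|)%N,
      (forall K1 K2 : {group gT}, in_interval G A K1 -> in_interval G A K2 ->
         K1 \proper K2 -> #|K1 : K1 :&: Ac| <= #|K2 : K2 :&: Ac|)%N &
      (#|G : Ac| = 2%N ->
         forall K : {group gT}, in_interval Ac H K -> #|K <*> A : K| = 2%N)].
Proof.
move=> _ boolGH atomA complA.
have [iA _ _] := atomA; have [/andP[_ sAcG] _ AAc] := complA.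
split.
- move=> K1 K2 iK1 /andP[_ sK2Ac] /proper_sub sK12.
  exact: (index_joing_compl_mono boolGH iA complA iK1 sK12 sK2Ac).
- by move=> K1 K2 _ _ /proper_sub sK12; rewrite !indexgI subset_leq_index.
- move=> idxAc K iK; have /andP[_ sKAc] := iK.
  have := index_joing_compl_mono boolGH iA complA iK sKAc (subxx Ac).
  rewrite (joingC Ac) AAc idxAc.
  have := index_join_atom_gt1 atomA complA sKAc.
  by case: #|_ : _| => [|[|[|m]]].
Qed.
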